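(* Let $\mathbb{H}$ be a simple hypergraph of order $n$ with strong independence number $\bar\alpha(\mathbb{H})$. Then for all non-negative integers $h>k$, $$\lambda_{h,k}(\mathbb{H})\le nh+\bar\alpha(\mathbb{H})(k-h)-k.$$
   Context: A set $W\subseteq V$ in a hypergraph $\mathbb{H}=(V,E)$ is strong stable if $|W\cap e|\le 1$ for every $e\in E$; $\bar\alpha(\mathbb{H})$ is the maximum cardinality of a strong stable set. For non-negative integers $h>k$, an $L(h,k)$-colouring of $\mathbb{H}$ is a map $f:V\to\mathbb{Z}_{\ge 0}$ such that $|f(u)-f(v)|\ge h$ whenever $u\ne v$ lie in a common edge, and $|f(u)-f(v)|\ge k$ whenever there are edges $e_1\ni v$, $e_2\ni u$ with $(e_1\cap e_2)\setminus\{u,v\}\ne\emptyset$. The span is $\max f-\min f$; $\lambda_{h,k}(\mathbb{H})$ is the minimum span of an $L(h,k)$-colouring. A hypergraph is simple if no edge contains another and every edge has at least two vertices. *)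

From Stdlib Require Import ClassicalEpsilon.
From mathcomp Require Import all_boot all_order all_algebra.
Set Implicit Arguments. Unset Strict Implicit. Unset Printing Implicit Defensive.
Import Order.TTheory GRing.Theory Num.Theory.

Definition simple_hypergraph (V : finType) (E : {set {set V}}) : Prop :=
  (forall e1 e2, e1 \in E -> e2 \in E -> e1 \subset e2 -> e1 = e2) /\
  (forall e, e \in E -> 2 <= #|e|).

Definition strong_stable (V : finType) (E : {set {set V}}) (W : {set V}) : bool :=
  [forall e in E, #|W :&: e| <= 1].

Definition alpha_bar (V : finType) (E : {set {set V}}) : nat :=
  \max_(W : {set V} | strong_stable E W) #|W|.

Definition dist (a b : nat) : nat := maxn a b - minn a b.

Definition Lhk_colouring (V : finType) (E : {set {set V}}) (h k : nat)
  (f : V -> nat) : Prop :=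
  (forall u v e, u != v -> e \in E -> u \in e -> v \in e -> h <= dist (f u) (f v)) /\
  (forall u v e1 e2, u != v -> e1 \in E -> e2 \in E -> v \in e1 -> u \in e2 ->
      (e1 :&: e2) :\: [set u; v] != set0 -> k <= dist (f u) (f v)).

Definition span (V : finType) (f : V -> nat) : nat :=
  let M := \max_(v : V) f v in M - \big[minn/M]_(v : V) f v.

Definition decP (P : Prop) : bool :=
  if excluded_middle_informative P then true else false.

Lemma decPP (P : Prop) : reflect P (decP P).
Proof. rewrite /decP; case: excluded_middle_informative => H; by constructor. Qed.

Lemma dist_mul (c a b : nat) : a != b -> c <= dist (c * a) (c * b).
Proof.
wlog ab : a b / a < b.
  move=> W ne; case: (ltngtP a b) => H; first exact: W.
  - by rewrite /dist maxnC minnC; apply: W; rewrite // eq_sym.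
  - by rewrite H eqxx in ne.
move=> _; rewrite /dist.
have le : c * a <= c * b by rewrite leq_mul2l ltnW ?orbT.
rewrite (maxn_idPr le) (minn_idPl le) -mulnBr.
by rewrite -{1}(muln1 c) leq_mul2l subn_gt0 ab orbT.
Qed.

Lemma Lhk_exists_span (V : finType) (E : {set {set V}}) (h k : nat) :
  exists m, decP (exists f, Lhk_colouring E h k f /\ span f = m).
Proof.
pose g := fun v : V => (h + k) * @enum_rank V v.
exists (span g); apply/decPP; exists g; split => //.
have key : forall u v : V, u != v -> h + k <= dist (g u) (g v).
  move=> u v uv; apply: dist_mul.
  by apply: contra uv => /eqP/val_inj/enum_rank_inj ->.
split.
- by move=> u v e uv _ _ _; apply: leq_trans (key u v uv); apply: leq_addr.
- by move=> u v e1 e2 uv _ _ _ _ _; apply: leq_trans (key u v uv); apply: leq_addl.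
Qed.

Definition lambda_hk (V : finType) (E : {set {set V}}) (h k : nat) : nat :=
  ex_minn (Lhk_exists_span E h k).

From Pilot Require Import Defs.
From mathcomp Require Import all_boot all_order all_algebra.
From mathcomp Require Import zify ring.
Import Order.TTheory GRing.Theory Num.Theory.

Set Implicit Arguments.
Unset Strict Implicit.
Unset Printing Implicit Defensive.

(* Take a maximum strong stable set W, with a := ᾱ(H) vertices.  Colour W with
   0, k, ..., (a-1)k and the other n - a vertices with (a-1)k + h, ..., (a-1)k + (n-a)h.
   Two vertices sharing an edge are never both in W, so they get colours at
   distance at least h, and any two distinct vertices get colours at distance at
   least k <= h.  The span of this colouring is (a-1)k + (n-a)h = nh + a(k-h) - k. *)

Lemma distC (x y : nat) : dist x y = dist y x.
Proof. rewrite /dist; lia. Qed.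

Lemma dist_addl (c x y : nat) : dist (c + x) (c + y) = dist x y.
Proof. rewrite /dist; lia. Qed.

Lemma dist_ge (x y c : nat) : x + c <= y -> c <= dist x y.
Proof. rewrite /dist; lia. Qed.

Lemma strong_stable_edge (V : finType) (E : {set {set V}}) (W e : {set V}) (u v : V) :
  strong_stable E W -> e \in E -> u \in e -> v \in e -> u \in W -> v \in W -> u = v.
Proof.
move=> /forallP/(_ e)/implyP stW eE ue ve uW vW; apply/eqP; apply: contraT => uv.
have : #|[set u; v]| <= #|W :&: e|.
  by apply/subset_leq_card/subsetP => x; rewrite !inE => /orP[] /eqP ->; apply/andP.
by rewrite cards2 uv => /leq_trans/(_ (stW eE)).
Qed.

Lemma strong_stable0 (V : finType) (E : {set {set V}}) : strong_stable E set0.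
Proof. by apply/forallP => e; apply/implyP => _; rewrite set0I cards0. Qed.

Lemma strong_stable1 (V : finType) (E : {set {set V}}) (v : V) : strong_stable E [set v].
Proof.
apply/forallP => e; apply/implyP => _.
by rewrite (leq_trans (subset_leq_card (subsetIl _ _))) ?cards1.
Qed.

Lemma alpha_bar_max (V : finType) (E : {set {set V}}) :
  {W : {set V} | strong_stable E W & alpha_bar E = #|W|}.
Proof.
rewrite /alpha_bar.
have [|W stW ->] := @eq_bigmax_cond _ (fun W => strong_stable E W) (fun W : {set V} => #|W|).
  by apply/card_gt0P; exists set0; apply: strong_stable0.
by exists W.
Qed.

Lemma alpha_bar_gt0 (V : finType) (E : {set {set V}}) : 0 < #|V| -> 0 < alpha_bar E.
Proof.
case/card_gt0P => v _.
have := @leq_bigmax_cond _ (fun W => strong_stable E W) (fun W : {set V} => #|W|) _ (strong_stable1 E v).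
by rewrite cards1.
Qed.

Lemma lambda_hk_min (V : finType) (E : {set {set V}}) (h k : nat) (f : V -> nat) :
  Lhk_colouring E h k f -> lambda_hk E h k <= Defs.span f.
Proof. by move=> colf; rewrite /lambda_hk; case: ex_minnP => m _; apply; apply/decPP; exists f. Qed.

Lemma span_le (V : finType) (f : V -> nat) (m : nat) : (forall v, f v <= m) -> Defs.span f <= m.
Proof. by move=> fm; rewrite /Defs.span /= (leq_trans (leq_subr _ _)) //; apply/bigmax_leqP. Qed.

Section BlockColouring.

Variables (V : finType) (W : {set V}) (h k : nat).

Let a := #|W|.

Definition block_colouring (v : V) : nat :=
  if v \in W then k * index v (enum W)
  else (a - 1) * k + h * (index v (enum (~: W))).+1.

Local Notation f := block_colouring.

Lemma block_colouring_in (v : V) : v \in W -> f v <= (a - 1) * k.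
Proof.
move=> vW; rewrite /f vW mulnC leq_mul2r.
have : index v (enum W) < a by rewrite /a cardE index_mem mem_enum.
by rewrite orbC => iv; apply/orP; left; lia.
Qed.

Lemma block_colouring_out (v : V) : v \notin W -> (a - 1) * k + h <= f v.
Proof. by move=> vW; rewrite /f (negbTE vW) leq_add2l leq_pmulr. Qed.

Lemma block_colouring_le (v : V) : f v <= (a - 1) * k + h * (#|V| - a).
Proof.
case: (boolP (v \in W)) => vW; first by rewrite (leq_trans (block_colouring_in vW)) ?leq_addr.
rewrite /f (negbTE vW) leq_add2l leq_mul2l.
by rewrite /a -(cardsC W) addKn cardE index_mem mem_enum inE vW orbT.
Qed.

Lemma block_colouring_sep_in (u v : V) : u \in W -> v \in W -> u != v -> k <= dist (f u) (f v).
Proof.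
move=> uW vW; rewrite /f uW vW => uv; apply: dist_mul.
by apply: contra uv => /eqP /index_inj -> //; rewrite mem_enum.
Qed.

Lemma block_colouring_sep_mixed (u v : V) : u \in W -> v \notin W -> h <= dist (f u) (f v).
Proof.
move=> uW vW; apply: dist_ge.
by apply: leq_trans (block_colouring_out vW); rewrite leq_add2r block_colouring_in.
Qed.

Lemma block_colouring_sep_out (u v : V) : u \notin W -> v \notin W -> u != v -> h <= dist (f u) (f v).
Proof.
move=> uW vW; rewrite /f (negbTE uW) (negbTE vW) dist_addl => uv; apply: dist_mul.
by apply: contra uv => /eqP [] /index_inj -> //; rewrite mem_enum inE.
Qed.

Lemma block_colouring_sep (u v : V) : u != v -> ~~ ((u \in W) && (v \in W)) -> h <= dist (f u) (f v).
Proof.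
move=> uv; case: (boolP (u \in W)) => uW; case: (boolP (v \in W)) => vW //= _.
- exact: block_colouring_sep_mixed.
- by rewrite distC; apply: block_colouring_sep_mixed.
- exact: block_colouring_sep_out.
Qed.

Lemma block_colouring_Lhk (E : {set {set V}}) :
  strong_stable E W -> k <= h -> Lhk_colouring E h k f.
Proof.
move=> stW kh; split=> [u v e uv eE ue ve | u v e1 e2 uv _ _ _ _ _].
  apply: (block_colouring_sep uv); apply/andP => -[uW vW].
  by move: uv; rewrite (strong_stable_edge stW eE ue ve uW vW) eqxx.
have [/andP[uW vW] | notWW] := boolP ((u \in W) && (v \in W)).
  exact: block_colouring_sep_in.
exact: leq_trans kh (block_colouring_sep uv notWW).
Qed.

End BlockColouring.

Lemma span_bound_int (n a h k : nat) : 0 < a -> a <= n ->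
  Posz ((a - 1) * k + h * (n - a)) = ((n * h)%:Z + a%:Z * (k%:Z - h%:Z) - k%:Z)%R.
Proof.
case: a => // b _ /subnK <-; rewrite addnK subSS subn0.
move: (n - b.+1) => c; rewrite !PoszD !PoszM -addn1 !PoszD; ring.
Qed.

Theorem theorem3p2 (V : finType) (E : {set {set V}}) (h k : nat) :
  0 < #|V| -> simple_hypergraph E -> k < h ->
  ((lambda_hk E h k)%:Z <=
     (#|V| * h)%:Z + (alpha_bar E)%:Z * (k%:Z - h%:Z) - k%:Z)%R.
Proof.
move=> V_gt0 _ kh.
have [W stW alphaW] := alpha_bar_max E.
have W_gt0 : 0 < #|W| by rewrite -alphaW alpha_bar_gt0.
rewrite alphaW -span_bound_int ?max_card // lez_nat.
apply: leq_trans (lambda_hk_min (block_colouring_Lhk stW (ltnW kh))) _.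
exact/span_le/block_colouring_le.
Qed.
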